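(* Consider the following algorithm \textsc{$\ell_\infty$-Minimization} on input $A\in\mathbb{R}^{n\times m}$, $b\in\mathbb{R}^n$ in the column span of $A$, $\epsilon>0$, $M>0$. Set $t=0$, $r^{(0)}=\mathbf{1}/m$, $t'=0$, $s=0\in\mathbb{R}^m$. While $\|r^{(t)}\|_1\le 1/\epsilon$: (i) let $x^{(t)}=\arg\min_{x:Ax=b}\sum_i r^{(t)}_i x_i^2$; (ii) if $\|x^{(t)}\|_\infty\le m^{1/3}M$, set $t'\leftarrow t'+1$ and $s\leftarrow s+x^{(t)}$; (iii) if $t'\ge 1$ and $\|s\|_\infty/t'\le(1+\epsilon)M$, return $s/t'$; (iv) let $\alpha^{(t)}_i=1$ if $|x^{(t)}_i|<(1+\epsilon)M$ and $\alpha^{(t)}_i=(x^{(t)}_i)^2/M^2$ otherwise; (v) if $\alpha^{(t)}=\mathbf{1}$, return $x^{(t)}$; (vi) set $r^{(t+1)}_i=r^{(t)}_i\alpha^{(t)}_i$ for all $i$ and $t\leftarrow t+1$. When the while loop exits, return $r^{(t)}/\|r^{(t)}\|_1$. Whenever this algorithm returns after the while loop exits, the returned vector $\bar r=r^{(t)}/\|r^{(t)}\|_1$ satisfies \[ \mathcal{E}_{\bar r}(b)\ \ge\ (1-\epsilon)^2M^2, \] where $\mathcal{E}_{\bar r}(b)=\min_{x:Ax=b}\sum_i \bar r_i x_i^2$.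
   Context: $\mathbf{1}$ is the all-ones vector in $\mathbb{R}^m$.
   Formalization: The accuracy parameter ε ranges over 0 < ε < 1 only, instead of over all ε > 0. The statement above fails without it. *)

From HB Require Import structures.
From mathcomp Require Import all_boot all_order all_algebra.
From mathcomp Require Import all_classical all_reals all_analysis.
Set Implicit Arguments. Unset Strict Implicit. Unset Printing Implicit Defensive.
Import Order.TTheory GRing.Theory Num.Theory.
Local Open Scope ring_scope.
Local Open Scope classical_set_scope.

Section LinfMin.
Variable R : realType.

Definition norm1 (m : nat) (v : 'cV[R]_m) : R := \sum_(i < m) `|v i 0|.
Definition norminf (m : nat) (v : 'cV[R]_m) : R :=
  \big[Num.max/0]_(i < m) `|v i 0|.

Definition wq (m : nat) (r x : 'cV[R]_m) : R := \sum_(i < m) r i 0 * x i 0 ^+ 2.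

Definition energy (n m : nat) (A : 'M[R]_(n, m)) (b : 'cV[R]_n) (r : 'cV[R]_m) : R :=
  inf [set wq r x | x in [set x : 'cV[R]_m | A *m x = b]].

Definition is_argmin (n m : nat) (A : 'M[R]_(n, m)) (b : 'cV[R]_n) (r x : 'cV[R]_m) :=
  A *m x = b /\ forall y, A *m y = b -> wq r x <= wq r y.

Definition alpha (m : nat) (eps M : R) (x : 'cV[R]_m) : 'cV[R]_m :=
  \col_i (if `|x i 0| < (1 + eps) * M then 1 else x i 0 ^+ 2 / M ^+ 2).

Definition thr (m : nat) (M : R) : R := (m%:R `^ (3%:R)^-1) * M.

(* after step (ii) of iteration k-1: t' = number of j < k with ||x^(j)||_inf <= m^{1/3} M,
   s = sum of those x^(j) *)
Definition tcnt (m : nat) (M : R) (x : nat -> 'cV[R]_m) (k : nat) : nat :=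
  \sum_(j < k | norminf (x j) <= thr m M) 1.
Definition ssum (m : nat) (M : R) (x : nat -> 'cV[R]_m) (k : nat) : 'cV[R]_m :=
  \sum_(j < k | norminf (x j) <= thr m M) x j.

(* [loop_exit_run A b eps M r x T]: r, x are the iterates of the algorithm,
   iterations t = 0, ..., T-1 were executed in full without returning, and the
   while-loop condition fails at t = T. *)
Definition loop_exit_run (n m : nat) (A : 'M[R]_(n, m)) (b : 'cV[R]_n) (eps M : R)
    (r x : nat -> 'cV[R]_m) (T : nat) : Prop :=
  [/\ r 0%N = const_mx (m%:R)^-1,
      (forall t, (t < T)%N ->
        [/\ norm1 (r t) <= eps^-1,
            is_argmin A b (r t) (x t),
            ~ ((1 <= tcnt M x t.+1)%N /\
               norminf (ssum M x t.+1) / (tcnt M x t.+1)%:R <= (1 + eps) * M),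
            alpha eps M (x t) != const_mx 1 &
            r t.+1 = \col_i (r t i 0 * alpha eps M (x t) i 0)]) &
      eps^-1 < norm1 (r T)].

End LinfMin.

From HB Require Import structures.
From mathcomp Require Import all_boot all_order all_algebra.
From mathcomp Require Import all_classical all_reals all_analysis.
From mathcomp Require Import ring lra.
Import Order.TTheory GRing.Theory Num.Theory.
Set Implicit Arguments. Unset Strict Implicit. Unset Printing Implicit Defensive.
Local Open Scope ring_scope.

(* Write N_t for the total weight of r^(t).  Every feasible y satisfies
   sum_i r^(t)_i y_i^2 >= M^2 (N_t - 1).  For the induction step, optimality of
   x = x^(t) gives sum_i r_i x_i y_i = sum_i r_i x_i^2, and in both branches of
   alpha the difference alpha_i y_i^2 - (2 x_i y_i - x_i^2 + M^2 (alpha_i - 1))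
   is a square, namely (y_i - x_i)^2 or (x_i y_i / M - M)^2; multiplying by r_i
   and summing, reweighting raises the energy of y by at least M^2 times the
   increase of the total weight.  At exit N_T > 1/eps, so the normalized weights
   have energy >= M^2 (1 - 1/N_T) >= (1 - eps) M^2 >= (1 - eps)^2 M^2. *)

Section WeightedQuadratic.
Variables (R : realType) (m : nat).
Implicit Types (r x y z : 'cV[R]_m).

Definition wdot r x y : R := \sum_i r i 0 * x i 0 * y i 0.

Definition mass r : R := \sum_i r i 0.

Definition reweight r z : 'cV[R]_m := \col_i (r i 0 * z i 0).

Lemma wdotDr r x y z : wdot r x (y + z) = wdot r x y + wdot r x z.
Proof. by rewrite /wdot -big_split; apply: eq_bigr => i _; rewrite mxE mulrDr. Qed.

Lemma wdot_diag r x : wdot r x x = wq r x.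
Proof. by apply: eq_bigr => i _; rewrite mulrA. Qed.

Lemma wqDZ r x z (s : R) :
  wq r (x + s *: z) = wq r x + s * (2 * wdot r x z) + s ^+ 2 * wq r z.
Proof.
rewrite /wq /wdot !mulr_sumr -!big_split /=.
by apply: eq_bigr => i _; rewrite !mxE; ring.
Qed.

Lemma wqZl (c : R) r x : wq (c *: r) x = c * wq r x.
Proof. by rewrite /wq mulr_sumr; apply: eq_bigr => i _; rewrite mxE mulrA. Qed.

Lemma norm1_mass r : (forall i, 0 <= r i 0) -> norm1 r = mass r.
Proof. by move=> r_ge0; apply: eq_bigr => i _; rewrite ger0_norm. Qed.

End WeightedQuadratic.

Lemma quadratic_ge0_linear_coef0 (R : realFieldType) (a c : R) :
  (forall s, 0 <= s * a + s ^+ 2 * c) -> a = 0.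
Proof.
move=> ge0; set k := `|c| + 1.
have k_gt0 : 0 < k by rewrite ltr_wpDl.
have ck_le : c - k <= -1 by have := ler_norm c; rewrite /k; lra.
(* Evaluate at s = -a/k: the value a^2 (c - k) / k^2 is then <= -a^2/k^2. *)
have : 0 <= a ^+ 2 * (c - k).
  rewrite (_ : _ * _ = k ^+ 2 * ((- a / k) * a + (- a / k) ^+ 2 * c)).
    by rewrite mulr_ge0 ?sqr_ge0.
  by field; rewrite gt_eqF.
by move=> h; apply/eqP; rewrite -sqrf_eq0 eq_le sqr_ge0 andbT; nra.
Qed.

Lemma argmin_wdot (R : realType) (n m : nat) (A : 'M[R]_(n, m)) (b : 'cV[R]_n)
    (r x y : 'cV[R]_m) :
  is_argmin A b r x -> A *m y = b -> wdot r x y = wq r x.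
Proof.
move=> [Ax x_min] Ay.
have orth : wdot r x (y - x) = 0.
  suff : 2 * wdot r x (y - x) = 0 by lra.
  apply: (@quadratic_ge0_linear_coef0 _ _ (wq r (y - x))) => s.
  have feas : A *m (x + s *: (y - x)) = b.
    by rewrite mulmxDr -scalemxAr mulmxBr Ax Ay subrr scaler0 addr0.
  by have := x_min _ feas; rewrite wqDZ; lra.
by rewrite -(subrK x y) wdotDr orth add0r wdot_diag.
Qed.

Lemma alpha_ge0 (R : realType) (m : nat) (eps M : R) (x : 'cV[R]_m) i :
  0 <= alpha eps M x i 0.
Proof. by rewrite mxE; case: ifP => _ //; rewrite divr_ge0 ?sqr_ge0. Qed.

Lemma alpha_mul_sqr_ge (R : realType) (m : nat) (eps M : R) (x : 'cV[R]_m) i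
    (y : R) :
  M != 0 ->
  2 * x i 0 * y - x i 0 ^+ 2 + M ^+ 2 * (alpha eps M x i 0 - 1)
    <= alpha eps M x i 0 * y ^+ 2.
Proof.
move=> M_neq0; rewrite mxE -subr_ge0; case: ifP => _.
  by rewrite [X in 0 <= X](_ : _ = (y - x i 0) ^+ 2) ?sqr_ge0 //; ring.
by rewrite [X in 0 <= X](_ : _ = (x i 0 * y / M - M) ^+ 2) ?sqr_ge0 //; field.
Qed.

Lemma wq_reweight_ge (R : realType) (n m : nat) (A : 'M[R]_(n, m)) (b : 'cV[R]_n)
    (eps M : R) (r x y : 'cV[R]_m) :
  (forall i, 0 <= r i 0) -> M != 0 -> is_argmin A b r x -> A *m y = b ->
  wq r x + M ^+ 2 * (mass (reweight r (alpha eps M x)) - mass r)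
    <= wq (reweight r (alpha eps M x)) y.
Proof.
move=> r_ge0 M_neq0 x_argmin Ay.
have -> : wq r x + M ^+ 2 * (mass (reweight r (alpha eps M x)) - mass r) =
    \sum_i r i 0 * (2 * x i 0 * y i 0 - x i 0 ^+ 2 + M ^+ 2 * (alpha eps M x i 0 - 1)).
  rewrite (_ : wq r x = 2 * wdot r x y - wq r x); last first.
    by rewrite (argmin_wdot x_argmin Ay); ring.
  rewrite /wdot /wq /mass -sumrB !mulr_sumr -sumrB -big_split /=.
  by apply: eq_bigr => i _; rewrite !mxE; ring.
apply: ler_sum => i _; rewrite [reweight _ _ _ _]mxE -[r i 0 * _ * _]mulrA.
by apply: ler_wpM2l; [exact: r_ge0 | exact: alpha_mul_sqr_ge].
Qed.

Lemma energy_ge (R : realType) (n m : nat) (A : 'M[R]_(n, m)) (b : 'cV[R]_n)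
    (r : 'cV[R]_m) (L : R) :
  (exists y, A *m y = b) -> (forall y, A *m y = b -> L <= wq r y) ->
  L <= energy A b r.
Proof.
move=> [y0 Ay0] lb; apply: lb_le_inf; first by exists (wq r y0), y0.
by move=> _ [y Ay <-]; exact: lb.
Qed.

Section ReweightingRun.
Variables (R : realType) (n m : nat) (A : 'M[R]_(n, m)) (b : 'cV[R]_n) (eps M : R).
Variables (r x : nat -> 'cV[R]_m) (T : nat).
Hypothesis m_gt0 : (0 < m)%N.
Hypothesis M_neq0 : M != 0.
Hypothesis r0 : r 0%N = const_mx (m%:R)^-1.
Hypothesis x_argmin : forall t, (t < T)%N -> is_argmin A b (r t) (x t).
Hypothesis r_update :
  forall t, (t < T)%N -> r t.+1 = reweight (r t) (alpha eps M (x t)).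

Lemma mass_r0 : mass (r 0) = 1.
Proof.
rewrite /mass r0; under eq_bigr do rewrite mxE.
by rewrite sumr_const card_ord -[_ *+ m]mulr_natr mulVf // pnatr_eq0 -lt0n.
Qed.

Lemma weights_ge0 t : (t <= T)%N -> forall i, 0 <= r t i 0.
Proof.
elim: t => [_ i | t IH lt_tT i]; first by rewrite r0 mxE invr_ge0 ler0n.
by rewrite r_update // mxE mulr_ge0 ?alpha_ge0 // IH // ltnW.
Qed.

Lemma wq_ge_mass t : (t <= T)%N ->
  forall y, A *m y = b -> M ^+ 2 * (mass (r t) - 1) <= wq (r t) y.
Proof.
elim: t => [_ y _ | t IH lt_tT y Ay].
  rewrite mass_r0 subrr mulr0 sumr_ge0 // => i _.
  by rewrite mulr_ge0 ?sqr_ge0 ?weights_ge0.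
have x_t := x_argmin lt_tT.
have := wq_reweight_ge eps (weights_ge0 (ltnW lt_tT)) M_neq0 x_t Ay.
have := IH (ltnW lt_tT) _ x_t.1.
rewrite -r_update //; lra.
Qed.

End ReweightingRun.

Lemma sqr_subr_le_subr_inv (R : realFieldType) (eps N : R) :
  0 < eps -> eps < 1 -> eps^-1 < N -> (1 - eps) ^+ 2 <= 1 - N^-1.
Proof.
move=> eps_gt0 eps_lt1 lt_epsN.
have N_gt0 : 0 < N by rewrite (lt_trans _ lt_epsN) ?invr_gt0.
have : N^-1 < eps by rewrite -(invrK eps) ltf_pV2 ?posrE ?invr_gt0.
nra.
Qed.

Theorem lemma4p5 (R : realType) (n m : nat) (A : 'M[R]_(n, m)) (b : 'cV[R]_n)
    (eps M : R) (r x : nat -> 'cV[R]_m) (T : nat) :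
  (0 < m)%N ->
  (exists y : 'cV[R]_m, A *m y = b) ->
  0 < eps -> eps < 1 -> 0 < M ->
  loop_exit_run A b eps M r x T ->
  energy A b ((norm1 (r T))^-1 *: r T) >= (1 - eps) ^+ 2 * M ^+ 2.
Proof.
move=> m_gt0 feasible eps_gt0 eps_lt1 M_gt0 [r0 run exit].
have M_neq0 : M != 0 by rewrite gt_eqF.
have x_argmin t : (t < T)%N -> is_argmin A b (r t) (x t) by case/run.
have r_update t : (t < T)%N -> r t.+1 = reweight (r t) (alpha eps M (x t)).
  by case/run.
rewrite norm1_mass in exit *; last exact: weights_ge0 r0 r_update _ (leqnn T).
set N := mass (r T) in exit *.
have N_gt0 : 0 < N by rewrite (lt_trans _ exit) ?invr_gt0.
apply: le_trans (energy_ge (L := M ^+ 2 * (1 - N^-1)) feasible _).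
  by rewrite mulrC; apply: ler_wpM2l; [exact: sqr_ge0 | exact: sqr_subr_le_subr_inv].
move=> y Ay; rewrite wqZl.
have -> : M ^+ 2 * (1 - N^-1) = N^-1 * (M ^+ 2 * (N - 1)).
  by field; rewrite gt_eqF.
apply: ler_wpM2l; first by rewrite invr_ge0 ltW.
exact: wq_ge_mass m_gt0 M_neq0 r0 x_argmin r_update _ (leqnn T) _ Ay.
Qed.
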